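(* For every $g\ge 1$, $\det(A_{g+1})=4[\det(A_g)]^2[\det(K_g)]^2$.
   Context: The graphs $\mathcal{H}_g$ with hubs $v_1,v_2,v_3,v_4$ and orientations $\mathcal{H}_g^e$ are defined recursively. $\mathcal{H}_1$ is the 4-cycle with edges $\{v_1,v_2\},\{v_1,v_3\},\{v_2,v_4\},\{v_3,v_4\}$, oriented $v_1\to v_2$, $v_1\to v_3$, $v_4\to v_2$, $v_3\to v_4$. For $g>1$, take four disjoint copies $\mathcal{H}_{g-1}^{(i)}$, $i=1,\dots,4$, of $\mathcal{H}_{g-1}$, each oriented as a copy of $\mathcal{H}_{g-1}^e$, with hubs $v_k^{(i)}$; identify $v_1^{(1)},v_1^{(4)}$ as $v_1$, $v_2^{(2)},v_1^{(3)}$ as $v_4$, $v_2^{(1)},v_1^{(2)}$ as $v_3$, and $v_2^{(3)},v_2^{(4)}$ as $v_2$; $\mathcal{H}_g^e$ is the union of the copies' orientations. $A_g$ is the skew adjacency matrix of $\mathcal{H}_g^e$: its $(u,v)$ entry is $1$ if $u\to v$ is an arc, $-1$ if $v\to u$ is an arc, and $0$ otherwise. $K_g$ is the submatrix of $A_g$ obtained by deleting the rows and columns corresponding to $v_1$ and $v_2$. *)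

From HB Require Import structures.
From mathcomp Require Import all_boot all_order all_algebra.
Set Implicit Arguments. Unset Strict Implicit. Unset Printing Implicit Defensive.
Import Order.TTheory GRing.Theory Num.Theory.
Local Open Scope ring_scope.

(* Vertices of H_g are labelled 0 .. nv g - 1 (naturals); the hubs
   v1, v2, v3, v4 are the labels 0, 1, 2, 3.  The index g >= 1;
   the value at g = 0 is a junk duplicate of g = 1. *)

Fixpoint nv (g : nat) : nat :=
  match g with
  | 0 | 1 => 4
  | g'.+1 => (4 * nv g' - 4)%N
  end.

(* Image hubs of the hubs v1, v2 of copy i (i = 0..3 stands for copies 1..4):
   copy 1: v1 -> v1, v2 -> v3 ; copy 2: v1 -> v3, v2 -> v4 ;
   copy 3: v1 -> v4, v2 -> v2 ; copy 4: v1 -> v1, v2 -> v2. *)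
Definition hub1 (i : nat) : nat :=
  match i with 0 => 0 | 1 => 2 | 2 => 3 | _ => 0 end%N.
Definition hub2 (i : nat) : nat :=
  match i with 0 => 2 | 1 => 3 | 2 => 1 | _ => 1 end%N.

(* Embedding of vertex k of H_g, copy i, into H_{g+1}: its hubs v1, v2
   are identified with the indicated hubs of H_{g+1}; all other vertices
   (including the copy's v3, v4) become fresh vertices. *)
Definition embed (n i k : nat) : nat :=
  match k with
  | 0 => hub1 i
  | 1 => hub2 i
  | _ => (4 + i * (n - 2) + (k - 2))%N
  end.

(* Arcs (u, v) meaning u -> v of the orientation H_g^e. *)
Fixpoint arcs (g : nat) : seq (nat * nat) :=
  match g with
  | 0 | 1 => [:: (0, 1); (0, 2); (3, 1); (2, 3)]%N
  | g'.+1 =>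
      flatten [seq [seq (embed (nv g') i a.1, embed (nv g') i a.2)
                   | a <- arcs g'] | i <- iota 0 4]
  end.

Definition skew (g u v : nat) : int :=
  if (u, v) \in arcs g then 1 else if (v, u) \in arcs g then -1 else 0.

Definition A (g : nat) : 'M[int]_(nv g) := \matrix_(i, j) skew g i j.

Definition K (g : nat) : 'M[int]_(nv g - 2) :=
  \matrix_(i, j) skew g (i + 2)%N (j + 2)%N.

(* Split off the hubs v1, v2: A_g = [[J, B], [-B^T, K_g]] with J = [[0, 1], [-1, 0]].
   When K_g is invertible, the Schur complement of K_g is J + B K_g^-1 B^T, and
   B K_g^-1 B^T is skew-symmetric of size 2, i.e. s J for a scalar s; hence
   det A_g = det K_g (1 + s)^2.  The four copies inside H_{g+1} meet only at its
   hubs, so A_{g+1} (resp. K_{g+1}) is a block matrix whose inner part is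
   diag(K_g, K_g, K_g, K_g) and whose Schur complement is (1 + s) times the hub
   block of A_1 (resp. K_1), of determinant 4 (resp. 1).  Therefore
   det A_{g+1} = 4 det K_g^4 (1 + s)^4 = 4 det A_g^2 det K_g^2 and
   det K_{g+1} = det K_g^3 det A_g, which also keeps K_g invertible along the
   induction. *)

From Pilot Require Import Defs.
From mathcomp Require Import all_boot all_order all_algebra.
From mathcomp Require Import zify ring.
(* Re-import so that [skew] is [Defs.skew], not the [skew] notation of sesquilinear. *)
Import Defs.
Set Implicit Arguments. Unset Strict Implicit. Unset Printing Implicit Defensive.
Import GRing.Theory Num.Theory.
Local Open Scope ring_scope.

Definition diag4 {R : nmodType} m (X : 'M[R]_m) :=
  block_mx X 0 0 (block_mx X 0 0 (block_mx X 0 0 X)).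

Definition J2 {R : nzRingType} : 'M[R]_2 := \matrix_(i, j) ((i < j)%N%:R - (j < i)%N%:R).

Section BlockMatrices.
Variable R : comNzRingType.

Lemma det_castmx p p' (e : p = p') (M : 'M[R]_p) : \det (castmx (e, e) M) = \det M.
Proof. by case: p' / e; rewrite castmx_id. Qed.

Lemma det_block_schur p q (Z : 'M[R]_p) C E (D Di : 'M[R]_q) : Di *m D = 1%:M ->
  \det (block_mx Z C E D) = \det D * \det (Z - C *m Di *m E).
Proof.
move=> DiD.
have -> : block_mx Z C E D =
    block_mx 1%:M (C *m Di) 0 1%:M *m block_mx (Z - C *m Di *m E) 0 E D.
  by rewrite mulmx_block !mul1mx !mul0mx ?mulmx0 !add0r ?addr0 -!mulmxA DiD mulmx1 subrK.
by rewrite det_mulmx det_ublock det_lblock !det1 !mul1r mulrC.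
Qed.

Lemma mul_row_diag_tr m p q (C1 : 'M[R]_(m, p)) (C2 : 'M[R]_(m, q)) X Y :
  row_mx C1 C2 *m block_mx X 0 0 Y *m (row_mx C1 C2)^T =
  C1 *m X *m C1^T + C2 *m Y *m C2^T.
Proof. by rewrite tr_row_mx mul_row_block !mulmx0 addr0 add0r mul_row_col. Qed.

Lemma det_diag4 m (X : 'M[R]_m) : \det (diag4 X) = \det X ^+ 4.
Proof. by rewrite /diag4 !det_ublock !exprS expr0 mulr1. Qed.

Lemma diag4_linv m (X Xi : 'M[R]_m) : Xi *m X = 1%:M -> diag4 Xi *m diag4 X = 1%:M.
Proof.
move=> XiX; rewrite /diag4 !mulmx_block !mulmx0 !mul0mx !addr0 !add0r XiX.
by rewrite -!scalar_mx_block.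
Qed.

Lemma tr_mulmx_skew m n (C : 'M[R]_(m, n)) X :
  X^T = - X -> (C *m X *m C^T)^T = - (C *m X *m C^T).
Proof. by move=> XT; rewrite !trmx_mul trmxK XT mulmxA mulmxN mulNmx. Qed.

Lemma det_mx22 (M : 'M[R]_2) : \det M = M 0 0 * M 1 1 - M 0 1 * M 1 0.
Proof.
rewrite (expand_det_row M 0) !big_ord_recl big_ord0 addr0 /cofactor !det_mx11 !mxE.
have -> : lift 0 (0 : 'I_1) = 1 :> 'I_2 by apply/val_inj.
have -> : lift 1 (0 : 'I_1) = 0 :> 'I_2 by apply/val_inj.
by rewrite /= expr0 expr1 mul1r mulN1r mulrN.
Qed.

Lemma det_J2 : \det (J2 : 'M[R]_2) = 1.
Proof. by rewrite det_mx22 !mxE /= !subr0 sub0r mulr0 sub0r mul1r opprK. Qed.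

Lemma mulNJ2 : - J2 *m J2 = 1%:M :> 'M[R]_2.
Proof.
apply/matrixP => i j; rewrite !mxE !big_ord_recl big_ord0 !mxE.
by case: i j => [[|[|//]] ?] [[|[|//]] ?] /=; ring.
Qed.

End BlockMatrices.

Lemma invmx_skew (R : comUnitRingType) n (K : 'M[R]_n) :
  K^T = - K -> (invmx K)^T = - invmx K.
Proof.
move=> KT; have [Ku | Kn] := boolP (K \in unitmx); last by rewrite !invmx_out ?inE.
by rewrite trmx_inv KT -scaleN1r invmxZ ?unitmxZ ?unitrN1 // invrN1 scaleN1r.
Qed.

Lemma invmx_J2 (R : comUnitRingType) : invmx J2 = - J2 :> 'M[R]_2.
Proof.
have Ju : (J2 : 'M[R]_2) \in unitmx by rewrite unitmxE det_J2 unitr1.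
by rewrite -[LHS]mul1mx -mulNJ2 -mulmxA mulmxV // mulmx1.
Qed.

Lemma skew_mx22 (R : numDomainType) (S : 'M[R]_2) : S^T = - S -> S = S 0 1 *: J2.
Proof.
move=> ST; have Sij i j : S j i = - S i j.
  by have := congr1 (fun M : 'M_2 => M i j) ST; rewrite !mxE.
have Sii i : S i i = 0 by apply/eqP; rewrite -eqNr -Sij.
have I2 (k : 'I_2) : k = 0 \/ k = 1.
  by case: k => [[|[|//]] ?]; [left | right]; apply/val_inj.
apply/matrixP => i j; rewrite !mxE.
by have [->|->] := I2 i; have [->|->] := I2 j; rewrite /= ?Sii ?(Sij 0 1); ring.
Qed.

Section NatIndexedMatrices.
Variable R : nzRingType.

Definition natmx p q (f : nat -> nat -> R) : 'M[R]_(p, q) := \matrix_(i < p, j < q) f i j.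

Lemma eq_natmx p q f f' : (forall i j, (i < p)%N -> (j < q)%N -> f i j = f' i j) ->
  natmx p q f = natmx p q f'.
Proof. by move=> ff'; apply/matrixP => i j; rewrite !mxE ff'. Qed.

Lemma natmx_eq0 p q f : (forall i j, (i < p)%N -> (j < q)%N -> f i j = 0) -> natmx p q f = 0.
Proof. by move=> f0; apply/matrixP => i j; rewrite !mxE f0. Qed.

Lemma natmx_row p q1 q2 f : natmx p (q1 + q2) f =
  row_mx (natmx p q1 f) (natmx p q2 (fun i j => f i (q1 + j)%N)).
Proof. by rewrite -[LHS]hsubmxK; congr row_mx; apply/matrixP => i j; rewrite !mxE. Qed.

Lemma natmx_block p1 p2 q1 q2 f : natmx (p1 + p2) (q1 + q2) f =
  block_mx (natmx p1 q1 f) (natmx p1 q2 (fun i j => f i (q1 + j)%N))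
           (natmx p2 q1 (fun i j => f (p1 + i)%N j))
           (natmx p2 q2 (fun i j => f (p1 + i)%N (q1 + j)%N)).
Proof. by rewrite -[LHS]submxK; congr block_mx; apply/matrixP => i j; rewrite !mxE. Qed.

Lemma castmx_natmx p p' (e : p = p') f : castmx (e, e) (natmx p p f) = natmx p' p' f.
Proof. by case: p' / e; rewrite castmx_id. Qed.

Lemma natmx_blockdiag p q f :
  (forall j k, (j < p)%N -> (k < q)%N -> f j (p + k)%N = 0 /\ f (p + k)%N j = 0) ->
  natmx (p + q) (p + q) f =
  block_mx (natmx p p f) 0 0 (natmx q q (fun j k => f (p + j)%N (p + k)%N)).
Proof.
move=> f0; rewrite natmx_block; congr block_mx; apply: natmx_eq0 => j k jp kq.
  by case: (f0 j k).
by case: (f0 k j).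
Qed.

End NatIndexedMatrices.

Section Construction.
Local Open Scope nat_scope.

Lemma nv_ge4 g : 4 <= nv g.
Proof. by elim: g => [|[|g] IH] //; rewrite [nv _]/= -/(nv g.+1); lia. Qed.

Lemma nvS g : 1 <= g -> nv g.+1 = 4 * nv g - 4.
Proof. by case: g. Qed.

Definition unembed (n i u : nat) : option nat :=
  if u < 4 then (if u == hub1 i then Some 0 else if u == hub2 i then Some 1 else None)
  else if (u - 4) %/ (n - 2) == i then Some ((u - 4) %% (n - 2) + 2) else None.

Lemma unembed_block n i i' j : 4 <= n -> j < n - 2 ->
  unembed n i' (4 + i * (n - 2) + j) = if i == i' then Some (j + 2) else None.
Proof.
move=> n4 jm; rewrite /unembed -addnA ltnNge leq_addr /=.
have m0 : 0 < n - 2 by lia.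
rewrite addnC addnK.
by rewrite divnMDl // divn_small // addn0 modnMDl modn_small.
Qed.

Lemma embed_eqE n i a u : 4 <= n -> i < 4 -> a < n ->
  (embed n i a == u) = (unembed n i u == Some a).
Proof.
move=> n4 i4; case: a => [|[|k]] an.
1,2: by case: i i4 => [|[|[|[|//]]]] _; case: u => [|[|[|[|u]]]] //=;
    rewrite /unembed /=; case: ifP => // _; rewrite addn2.
- have -> : embed n i k.+2 = 4 + i * (n - 2) + k by rewrite /embed; lia.
  apply/eqP/eqP => [<-|]; first by rewrite unembed_block ?eqxx ?addn2 //; lia.
  rewrite /unembed; case: ifP => [_|u4]; first by do 2?case: ifP.
  case: eqP => // <- [hk]; have := divn_eq (u - 4) (n - 2); lia.
Qed.

Lemma embedK n i a : 4 <= n -> i < 4 -> a < n -> unembed n i (embed n i a) = Some a.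
Proof. by move=> *; apply/eqP; rewrite -embed_eqE. Qed.

Lemma unembed_bound n i u a : 4 <= n -> i < 4 -> unembed n i u = Some a ->
  (u < 4 + 4 * (n - 2)) && (a < n).
Proof.
move=> n4 i4; rewrite /unembed; case: ifP => u4.
  by case: ifP => _; [case=> <-|case: ifP => _ // [<-]]; lia.
case: eqP => // hi [<-]; have m0 : 0 < n - 2 by lia.
have : (u - 4) %/ (n - 2) < 4 by rewrite hi.
by rewrite ltn_divLR //; have := ltn_pmod (u - 4) m0; lia.
Qed.

Lemma unembed_v1v2 n i u a : u < 2 -> unembed n i u = Some a -> a = u.
Proof. by case: u => [|[|//]] _; case: i => [|[|[|i]]] // [<-]. Qed.

Lemma unembed_copy n i i' u v : 4 <= n -> u != v -> i < 4 -> i' < 4 ->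
  unembed n i u -> unembed n i v -> unembed n i' u -> unembed n i' v -> i = i'.
Proof.
move=> n4 uv i4 i'4.
have inner w : 4 <= w -> unembed n i w -> unembed n i' w -> i = i'.
  by move=> w4; rewrite /unembed ltnNge w4 /=; do 2!case: eqP => // <-.
case: (leqP 4 u) => [/inner + Hiu _ Hi'u _ | u4]; first exact.
case: (leqP 4 v) => [/inner + _ Hiv _ Hi'v | v4]; first exact.
clear inner; move: uv; case: u u4 => [|[|[|[|//]]]] _; case: v v4 => [|[|[|[|//]]]] _ //= _;
by case: i i4 => [|[|[|[|//]]]] _; case: i' i'4 => [|[|[|[|//]]]].
Qed.

Definition copy_arc g u v i : bool :=
  if (unembed (nv g) i u, unembed (nv g) i v) is (Some a, Some b)
  then (a, b) \in arcs g else false.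

Lemma mem_arcsS g u v : 1 <= g ->
  (forall a b, (a, b) \in arcs g -> (a < nv g) && (b < nv g)) ->
  ((u, v) \in arcs g.+1) = has (copy_arc g u v) (iota 0 4).
Proof.
case: g => // g _ Hb; have n4 := nv_ge4 g.+1.
apply/flattenP/hasP => [[_ /mapP [i iin ->] /mapP [[a b] ab [-> ->]]] | [i iin]];
  have i4 : i < 4 by rewrite mem_iota in iin.
  have /andP [an bn] := Hb _ _ ab.
  by exists i => //; rewrite /copy_arc !embedK.
rewrite /copy_arc; case Ea: unembed => [a|] //; case Eb: unembed => [b|] // ab.
have /andP [an bn] := Hb _ _ ab.
exists [seq (embed (nv g.+1) i e.1, embed (nv g.+1) i e.2) | e <- arcs g.+1].
  by apply/mapP; exists i.
apply/mapP; exists (a, b) => //.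
by congr pair; apply/esym/eqP; rewrite embed_eqE ?Ea ?Eb.
Qed.

Definition wf_arcs g := (0, 1) \in arcs g /\
  forall a b, (a, b) \in arcs g ->
  [/\ a < nv g, b < nv g, (a < 2) && (b < 2) ==> (a == 0) && (b == 1)
    & (b, a) \notin arcs g].

Lemma wf_arcs1 : wf_arcs 1.
Proof. by split=> // a b; rewrite !inE; case/or4P => /eqP [-> ->]. Qed.

Lemma wf_arcsS g : 1 <= g -> wf_arcs g -> wf_arcs g.+1.
Proof.
move=> g1 [h01 H]; have n4 := nv_ge4 g.
have Hb a b : (a, b) \in arcs g -> (a < nv g) && (b < nv g) by case/H=> -> ->.
split; first by rewrite mem_arcsS //; apply/hasP; exists 3.
move=> u v; rewrite mem_arcsS // => /hasP [i iin]; rewrite /copy_arc.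
have i4 : i < 4 by rewrite mem_iota in iin.
case Ea: unembed => [a|] //; case Eb: unembed => [b|] // ab.
have [an bn hub nba] := H _ _ ab.
have /andP [ub _] := unembed_bound n4 i4 Ea.
have /andP [vb _] := unembed_bound n4 i4 Eb.
rewrite nvS //; split; [lia | lia | |].
  apply/implyP => /andP [u2 v2].
  by move: hub; rewrite (unembed_v1v2 u2 Ea) (unembed_v1v2 v2 Eb) u2 v2.
rewrite mem_arcsS //; apply/hasP => -[i' i'in]; rewrite /copy_arc.
have i'4 : i' < 4 by rewrite mem_iota in i'in.
case Eb': unembed => [b'|] //; case Ea': unembed => [a'|] // ba.
have [euv|uv] := eqVneq u v.
  by move: Eb; rewrite -euv Ea => -[eab]; subst b; rewrite ab in nba.
have ii' : i = i' by apply: (unembed_copy n4 uv i4 i'4); rewrite ?Ea ?Eb ?Ea' ?Eb'.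
by move: Ea' Eb'; rewrite -ii' Ea Eb => -[?] [?]; subst a' b'; rewrite ba in nba.
Qed.

Lemma arcs_wf g : 1 <= g -> wf_arcs g.
Proof. by elim: g => [|[|g] IH] // _; [exact: wf_arcs1 | exact: wf_arcsS (IH _)]. Qed.

Lemma arcs_bound g a b : 1 <= g -> (a, b) \in arcs g -> (a < nv g) && (b < nv g).
Proof. by move=> /arcs_wf [_ H] /H [-> ->]. Qed.

Lemma mem_arcs_v1v2 g a b : 1 <= g -> a < 2 -> b < 2 ->
  ((a, b) \in arcs g) = (a == 0) && (b == 1).
Proof.
move=> /arcs_wf [h01 H] a2 b2; apply/idP/idP; last by case/andP => /eqP -> /eqP ->.
by case/H=> _ _ /implyP + _; apply; rewrite a2 b2.
Qed.

End Construction.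

Lemma skewN g u v : (1 <= g)%N -> skew g u v = - skew g v u.
Proof.
move=> /arcs_wf [_ H]; rewrite /skew; case: ifP => [uv | _]; last by case: ifP.
by have [_ _ _ /negbTE ->] := H _ _ uv.
Qed.

Lemma skew_v1v2 g a b : (1 <= g)%N -> (a < 2)%N -> (b < 2)%N -> skew g a b = skew 1 a b.
Proof. by move=> g1 a2 b2; rewrite /skew !mem_arcs_v1v2. Qed.

Lemma skewS_hubs g h h' : (1 <= g)%N -> (h < 4)%N -> (h' < 4)%N ->
  skew g.+1 h h' = skew 1 h h'.
Proof.
move=> g1 h4 h'4.
have mem_hubs u v : (u < 4)%N -> (v < 4)%N -> ((u, v) \in arcs g.+1) = ((u, v) \in arcs 1).
  move=> u4 v4; rewrite mem_arcsS //; last by move=> a b; apply: arcs_bound.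
  case: u u4 => [|[|[|[|//]]]] _; case: v v4 => [|[|[|[|//]]]] _;
  by rewrite /= /copy_arc /= ?mem_arcs_v1v2.
by rewrite /skew !mem_hubs.
Qed.

Lemma skewS_block g u i j : (1 <= g)%N -> (i < 4)%N -> (j < nv g - 2)%N ->
  skew g.+1 u (4 + i * (nv g - 2) + j) =
  if unembed (nv g) i u is Some a then skew g a (j + 2) else 0.
Proof.
move=> g1 i4 jm; have n4 := nv_ge4 g.
rewrite /skew !mem_arcsS //; try by move=> a b; apply: arcs_bound.
rewrite /= /copy_arc !unembed_block //.
by case: i i4 => [|[|[|[|//]]]] _; do 4?case: (unembed _ _ u) => [?|] /=; rewrite ?orbF.
Qed.

Definition skq g u v : rat := (skew g u v)%:~R.

Definition Aq g := natmx (nv g) (nv g) (skq g).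
Definition Bq g := natmx 2 (nv g - 2) (fun a j => skq g a (2 + j)).
Definition Kq g := natmx (nv g - 2) (nv g - 2) (fun i j => skq g (2 + i) (2 + j)).

Lemma map_A g : map_mx intr (A g) = Aq g.
Proof. by apply/matrixP => i j; rewrite !mxE. Qed.

Lemma map_K g : map_mx intr (K g) = Kq g.
Proof. by apply/matrixP => i j; rewrite !mxE /skq addnC [(j + 2)%N]addnC. Qed.

Lemma skqN g u v : (1 <= g)%N -> skq g u v = - skq g v u.
Proof. by move=> g1; rewrite /skq (skewN _ _ g1) mulrNz. Qed.

Lemma Kq_skew g : (1 <= g)%N -> (Kq g)^T = - Kq g.
Proof. by move=> g1; apply/matrixP => i j; rewrite !mxE (skqN _ _ g1). Qed.

Lemma Kq1 : Kq 1 = J2.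
Proof. by apply/matrixP => i j; rewrite !mxE; case: i j => [[|[|//]] ?] [[|[|//]] ?]. Qed.

Lemma Aq_block g (e : nv g = (2 + (nv g - 2))%N) : (1 <= g)%N ->
  castmx (e, e) (Aq g) = block_mx J2 (Bq g) (- (Bq g)^T) (Kq g).
Proof.
move=> g1; rewrite castmx_natmx natmx_block; congr block_mx.
- apply/matrixP => i j; rewrite !mxE /skq skew_v1v2 //.
  by case: i j => [[|[|//]] ?] [[|[|//]] ?].
- by apply/matrixP => i j; rewrite !mxE (skqN _ _ g1).
Qed.

(* The scalar s of the Schur complement [(1 + s) *: J2] of [Kq g] in [Aq g]. *)
Definition coupling g := (Bq g *m invmx (Kq g) *m (Bq g)^T) 0 1.

Lemma schur_v1v2 g : (1 <= g)%N -> Bq g *m invmx (Kq g) *m (Bq g)^T = coupling g *: J2.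
Proof. by move=> g1; apply/skew_mx22/tr_mulmx_skew/invmx_skew/Kq_skew. Qed.

Lemma det_Aq g : (1 <= g)%N -> Kq g \in unitmx ->
  \det (Aq g) = \det (Kq g) * (1 + coupling g) ^+ 2.
Proof.
move=> g1 Ku; have e : nv g = (2 + (nv g - 2))%N by have := nv_ge4 g; lia.
rewrite -(det_castmx e) Aq_block // (det_block_schur _ _ _ (mulVmx Ku)).
by rewrite mulmxN opprK schur_v1v2 // -{1}[J2]scale1r -scalerDl detZ det_J2 mulr1.
Qed.

Lemma skqS_copy g i j k : (1 <= g)%N -> (i < 4)%N ->
  (j < nv g - 2)%N -> (k < nv g - 2)%N ->
  skq g.+1 (4 + i * (nv g - 2) + j) (4 + i * (nv g - 2) + k) = skq g (2 + j) (2 + k).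
Proof.
move=> g1 i4 jm km.
by rewrite /skq skewS_block // unembed_block ?nv_ge4 // eqxx addnC [(k + 2)%N]addnC.
Qed.

Lemma skqS_copy_out g i j v : (1 <= g)%N -> (i < 4)%N -> (j < nv g - 2)%N -> (4 <= v)%N ->
  (v < 4 + i * (nv g - 2))%N || (4 + i.+1 * (nv g - 2) <= v)%N ->
  skq g.+1 v (4 + i * (nv g - 2) + j) = 0.
Proof.
move=> g1 i4 jm v4 vout; have n4 := nv_ge4 g; have m0 : (0 < nv g - 2)%N by lia.
rewrite /skq skewS_block //; suff -> : unembed (nv g) i v = None by [].
rewrite /unembed ltnNge v4 /=; case: eqP => // vi; move: vout.
have := divn_eq (v - 4) (nv g - 2); have := ltn_pmod (v - 4) m0.
rewrite vi mulSn; lia.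
Qed.

Definition hub_of i (a : nat) := if a is 0 then hub1 i else hub2 i.

Lemma skqS_hub_copy g i h j : (1 <= g)%N -> (i < 4)%N -> (h < 4)%N -> (j < nv g - 2)%N ->
  skq g.+1 h (4 + i * (nv g - 2) + j) =
  \sum_(a < 2) (hub_of i a == h)%:R * skq g a (2 + j).
Proof.
move=> g1 i4 h4 jm; rewrite /skq skewS_block // !big_ord_recl big_ord0 addr0 /= addnC.
by case: i i4 => [|[|[|[|//]]]] _; case: h h4 => [|[|[|[|//]]]] _;
  rewrite /= ?mul1r ?mul0r ?addr0 ?add0r.
Qed.

(* The principal submatrix of A_{g+1} on the vertices [o, o + 1, ...]: it is A_{g+1} for
   [o = 0] and K_{g+1} for [o = 2].  Its first [4 - o] vertices are hubs, the others are
   the inner vertices of the four copies of H_g, in order. *)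
Definition Yq g o := natmx
  (4 - o + (nv g - 2 + (nv g - 2 + (nv g - 2 + (nv g - 2)))))
  (4 - o + (nv g - 2 + (nv g - 2 + (nv g - 2 + (nv g - 2)))))
  (fun u v => skq g.+1 (o + u) (o + v)).

Definition Hq o := natmx (4 - o) (4 - o) (fun h h' => skq 1 (o + h) (o + h')).
Definition Pq o i : 'M[rat]_(4 - o, 2) := natmx _ _ (fun h a => (hub_of i a == (o + h)%N)%:R).

Lemma sum_Pq_J2 o : (o <= 4)%N -> \sum_(i < 4) Pq o i *m J2 *m (Pq o i)^T = Hq o.
Proof.
move=> o4; apply/matrixP => h h'.
have hb : (o + h < 4)%N by have := ltn_ord h; lia.
have hb' : (o + h' < 4)%N by have := ltn_ord h'; lia.
rewrite summxE !(big_ord0, big_ord_recl, mxE).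
move: (o + h)%N (o + h')%N hb hb' => u v.
by case: u => [|[|[|[|//]]]] _; case: v => [|[|[|[|//]]]] _; rewrite /skq /skew /=; ring.
Qed.

Definition Cq g o := row_mx (Pq o 0 *m Bq g)
  (row_mx (Pq o 1 *m Bq g) (row_mx (Pq o 2 *m Bq g) (Pq o 3 *m Bq g))).

Lemma natmx_hubs_copies g o : (1 <= g)%N -> (o <= 4)%N ->
  natmx (4 - o) (nv g - 2 + (nv g - 2 + (nv g - 2 + (nv g - 2))))
        (fun h j => skq g.+1 (o + h) (4 + j)) = Cq g o.
Proof.
move=> g1 o4.
have entry i (h : 'I_(4 - o)) (j : 'I_(nv g - 2)) u : (i < 4)%N ->
    u = (4 + i * (nv g - 2) + j)%N -> skq g.+1 (o + h) u = (Pq o i *m Bq g) h j.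
  move=> i4 ->; rewrite skqS_hub_copy //; last by have := ltn_ord h; lia.
  by rewrite mxE; apply: eq_bigr => a _; rewrite !mxE.
rewrite /Cq !natmx_row.
by congr row_mx; [|congr row_mx; [|congr row_mx]]; apply/matrixP => h j;
  rewrite [LHS]mxE; [apply: (entry 0) | apply: (entry 1) | apply: (entry 2) | apply: (entry 3)];
  rewrite //=; lia.
Qed.

Lemma natmx_copies g : (1 <= g)%N ->
  natmx (nv g - 2 + (nv g - 2 + (nv g - 2 + (nv g - 2))))
        (nv g - 2 + (nv g - 2 + (nv g - 2 + (nv g - 2))))
        (fun j k => skq g.+1 (4 + j) (4 + k)) = diag4 (Kq g).
Proof.
move=> g1.
have copy i j k u v : (i < 4)%N -> (j < nv g - 2)%N -> (k < nv g - 2)%N ->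
    u = (4 + i * (nv g - 2) + j)%N -> v = (4 + i * (nv g - 2) + k)%N ->
    skq g.+1 u v = skq g (2 + j) (2 + k).
  by move=> i4 jm km -> ->; apply: skqS_copy.
have out i j u v : (i < 4)%N -> (j < nv g - 2)%N -> u = (4 + i * (nv g - 2) + j)%N ->
    (4 <= v)%N -> (v < 4 + i * (nv g - 2))%N || (4 + i.+1 * (nv g - 2) <= v)%N ->
    skq g.+1 u v = 0 /\ skq g.+1 v u = 0.
  by move=> i4 jm -> v4 vout; rewrite skqN // !skqS_copy_out // oppr0.
rewrite /diag4 !natmx_blockdiag => [|j k jm km|j k jm km|j k jm km].
- congr block_mx; [|congr block_mx; [|congr block_mx]]; apply: eq_natmx => j k jm km.
  + by apply: (copy 0); lia.
  + by apply: (copy 1); lia.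
  + by apply: (copy 2); lia.
  + by apply: (copy 3); lia.
- by apply: (out 2 j); lia.
- by apply: (out 1 j); lia.
- by apply: (out 0 j); lia.
Qed.

Lemma Yq_block g o : (1 <= g)%N -> (o <= 4)%N ->
  Yq g o = block_mx (Hq o) (Cq g o) (- (Cq g o)^T) (diag4 (Kq g)).
Proof.
move=> g1 o4; rewrite /Yq natmx_block -natmx_hubs_copies // -natmx_copies //.
congr block_mx; try (apply: eq_natmx => u v ub vb; congr skq; lia).
- by apply: eq_natmx => h h' hb hb'; rewrite /skq skewS_hubs //; lia.
- by apply/matrixP => j h; rewrite !mxE skqN //; congr (- skq _ _ _); lia.
Qed.

Lemma det_Yq g o : (1 <= g)%N -> (o <= 4)%N -> Kq g \in unitmx ->
  \det (Yq g o) = \det (Kq g) ^+ 4 * ((1 + coupling g) ^+ (4 - o) * \det (Hq o)).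
Proof.
move=> g1 o4 Ku.
have KiK := diag4_linv (mulVmx Ku).
rewrite Yq_block // (det_block_schur _ _ _ KiK) det_diag4 mulmxN opprK /Cq.
have term i : Pq o i *m Bq g *m invmx (Kq g) *m (Pq o i *m Bq g)^T =
    coupling g *: (Pq o i *m J2 *m (Pq o i)^T).
  rewrite trmx_mul (_ : _ *m _ = Pq o i *m (Bq g *m invmx (Kq g) *m (Bq g)^T) *m (Pq o i)^T).
    by rewrite schur_v1v2 // -scalemxAr -scalemxAl.
  by rewrite !mulmxA.
have sumE := sum_Pq_J2 o4; rewrite !big_ord_recl big_ord0 addr0 in sumE.
rewrite !mul_row_diag_tr !term -!scalerDr sumE.
by rewrite -{1}[Hq o]scale1r -scalerDl detZ.
Qed.

Lemma Kq1_unit : Kq 1 \in unitmx.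
Proof. by rewrite Kq1 unitmxE det_J2 unitr1. Qed.

Lemma coupling1 : coupling 1 = 1.
Proof. by rewrite /coupling Kq1 invmx_J2 !(big_ord0, big_ord_recl, mxE) /skq /skew /=; ring. Qed.

Lemma det_Hq0 : \det (Hq 0) = 4.
Proof.
change (\det (Aq 1) = 4).
by rewrite det_Aq // ?Kq1_unit // coupling1 Kq1 det_J2 mul1r.
Qed.

Lemma det_Hq2 : \det (Hq 2) = 1.
Proof. by change (\det (Kq 1) = 1); rewrite Kq1 det_J2. Qed.

Lemma det_AqS g : (1 <= g)%N -> Kq g \in unitmx ->
  \det (Aq g.+1) = 4 * \det (Aq g) ^+ 2 * \det (Kq g) ^+ 2.
Proof.
move=> g1 Ku.
have e : (4 - 0 + (nv g - 2 + (nv g - 2 + (nv g - 2 + (nv g - 2)))) = nv g.+1)%N.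
  by rewrite nvS //; have := nv_ge4 g; lia.
rewrite (_ : Aq g.+1 = castmx (e, e) (Yq g 0)); last by rewrite castmx_natmx.
by rewrite det_castmx det_Yq // det_Hq0 det_Aq //; ring.
Qed.

Lemma det_KqS g : (1 <= g)%N -> Kq g \in unitmx ->
  \det (Kq g.+1) = \det (Kq g) ^+ 3 * \det (Aq g).
Proof.
move=> g1 Ku.
have e : (4 - 2 + (nv g - 2 + (nv g - 2 + (nv g - 2 + (nv g - 2)))) = nv g.+1 - 2)%N.
  by rewrite nvS //; have := nv_ge4 g; lia.
rewrite (_ : Kq g.+1 = castmx (e, e) (Yq g 2)); last by rewrite castmx_natmx.
by rewrite det_castmx det_Yq // det_Hq2 det_Aq //; ring.
Qed.

Lemma det_Kq_Aq_neq0 g : (1 <= g)%N -> (\det (Kq g) != 0) && (\det (Aq g) != 0).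
Proof.
elim: g => [|[|g] IH] // _.
  by have -> : \det (Aq 1) = 4 := det_Hq0; rewrite Kq1 det_J2 oner_neq0.
have /andP [nK nA] := IH isT; have Ku : Kq g.+1 \in unitmx by rewrite unitmxE unitfE.
rewrite det_AqS // det_KqS //; apply/andP; split.
  by apply: mulf_neq0; first exact: expf_neq0.
by apply: mulf_neq0; [apply: mulf_neq0 | exact: expf_neq0]; [|exact: expf_neq0].
Qed.

Theorem lemma8 (g : nat) : (1 <= g)%N ->
  \det (A g.+1) = 4 * (\det (A g)) ^+ 2 * (\det (K g)) ^+ 2.
Proof.
move=> g1; have /andP [nK _] := det_Kq_Aq_neq0 g1.
have Ku : Kq g \in unitmx by rewrite unitmxE unitfE.
apply: (@intr_inj rat).
by rewrite 2!rmorphM !rmorphXn -!det_map_mx !map_A map_K det_AqS.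
Qed.
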